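(* Let $(S,K,I)$ be a split graph, and let $u\in I$ and $z\in K$ be such that $uxz$ is a path in $A_4(S)$ for some $x\in K$. Then $u$ and $z$ are joined by a path $P$ in $A_4(S)$ with $V(P)\setminus\{z\}\subseteq I$ and $|V(P)|\le 4$.
   Context: All graphs are finite and simple. A split graph is a graph $S$ whose vertex set is a disjoint union $V(S)=K\,\dot\cup\,I$ with $K$ a clique and $I$ an independent set; $(K,I)$ is called a bipartition of $S$, and $(S,K,I)$ denotes $S$ together with this fixed bipartition. A 2-switch in a graph $G$ is performed on four distinct vertices $a,b,c,d$ with $ab,cd\in E(G)$ and $ac,bd\notin E(G)$: it deletes $ab,cd$ and adds $ac,bd$; $a,b,c,d$ are said to participate in it. $A_4(G)$ is the graph with vertex set $V(G)$ in which distinct $u,v$ are adjacent iff some 2-switch on $G$ has both $u$ and $v$ among its participating vertices. *)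

From mathcomp Require Import all_boot.
Set Implicit Arguments. Unset Strict Implicit. Unset Printing Implicit Defensive.

Definition simple_graph (T : finType) (e : rel T) : Prop :=
  symmetric e /\ irreflexive e.

Definition split_bipartition (T : finType) (e : rel T) (K I : {set T}) : Prop :=
  [disjoint K & I] /\ K :|: I = [set: T] /\
  (forall x y, x \in K -> y \in K -> x != y -> e x y) /\
  (forall x y, x \in I -> y \in I -> ~~ e x y).

Definition two_switch (T : finType) (e : rel T) (a b c d : T) : bool :=
  [&& uniq [:: a; b; c; d], e a b, e c d, ~~ e a c & ~~ e b d].

Definition A4 (T : finType) (e : rel T) : rel T := fun u v =>
  (u != v) && [exists a, exists b, exists c, exists d,
     [&& two_switch e a b c d, u \in [:: a; b; c; d] & v \in [:: a; b; c; d]]].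

From mathcomp Require Import all_boot.
Set Implicit Arguments. Unset Strict Implicit. Unset Printing Implicit Defensive.

(* In a split graph every 2-switch has the shape k1 i1 k2 i2 with k1, k2 in K,
   i1, i2 in I, edges k1 i1, k2 i2 and non-edges k1 i2, k2 i1.  Fix such
   switches realizing the A_4-edges xz and ux.  Depending on two adjacencies
   between z, u and the vertices of these switches, either u and z lie in a
   common 2-switch, or a third switch through two I-vertices y, i closes an
   A_4-path u y i z. *)

Section TwoSwitch.
Variables (T : finType) (e : rel T).

Lemma A4_neq v w : A4 e v w -> v != w.
Proof. by case/andP. Qed.

Lemma A4_two_switch a b c d v w : two_switch e a b c d ->
  v \in [:: a; b; c; d] -> w \in [:: a; b; c; d] -> v != w -> A4 e v w.
Proof.
move=> sw v_in w_in vw; rewrite /A4 vw.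
apply/existsP; exists a; apply/existsP; exists b.
apply/existsP; exists c; apply/existsP; exists d.
by rewrite sw v_in w_in.
Qed.

Lemma two_switch_of_A4 v w : A4 e v w -> exists a b c d,
  [/\ two_switch e a b c d, v \in [:: a; b; c; d] & w \in [:: a; b; c; d]].
Proof.
case/andP=> _ /existsP [a /existsP [b /existsP [c /existsP [d]]]].
by case/and3P=> sw v_in w_in; exists a, b, c, d.
Qed.

End TwoSwitch.

Section ShortPath.
Variables (T : finType) (e : rel T) (I : {set T}).

Definition short_A4_path_via_I (u z : T) : Prop :=
  exists p : seq T,
    [/\ path (A4 e) u p, last u p = z, uniq (u :: p),
        all (fun v => (v == z) || (v \in I)) (u :: p)
      & size (u :: p) <= 4].

Lemma short_A4_path_via_I_edge u z : u \in I -> A4 e u z -> short_A4_path_via_I u z.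
Proof.
move=> uI uz; exists [:: z]; split=> //=; first by rewrite uz.
  by rewrite inE (A4_neq uz).
by rewrite uI eqxx orbT.
Qed.

Lemma short_A4_path_via_I_path3 u y i z :
  u \in I -> y \in I -> i \in I -> z \notin I -> u != i ->
  A4 e u y -> A4 e y i -> A4 e i z -> short_A4_path_via_I u z.
Proof.
move=> uI yI iI zI ui uy yi iz; exists [:: y; i; z]; split=> //=.
- by rewrite uy yi iz.
- have neq_z v : v \in I -> v != z by move=> vI; apply: contraNneq zI => <-.
  by rewrite !inE !negb_or (A4_neq uy) (A4_neq yi) ui !neq_z.
- by rewrite uI yI iI eqxx !orbT.
Qed.

End ShortPath.

Section SplitGraph.
Variables (T : finType) (e : rel T) (K I : {set T}).
Hypothesis e_sym : symmetric e.
Hypothesis split : split_bipartition e K I.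

Lemma split_memI t : (t \in I) = (t \notin K).
Proof.
have [KI [cover _]] := split.
have : t \in K :|: I by rewrite cover inE.
rewrite inE; case tK: (t \in K) => //= _.
by rewrite (disjointFr KI tK).
Qed.

Lemma split_adjK v w : v \in K -> w \in K -> v != w -> e v w.
Proof. by have [_ [_ [cliqueK _]]] := split; apply: cliqueK. Qed.

Lemma split_adjI v w : v \in I -> e v w -> w \in K.
Proof.
have [_ [_ [_ indepI]]] := split.
by move=> vI; apply: contraTT; rewrite -split_memI => wI; apply: indepI.
Qed.

Lemma split_neqIK i k : i \in I -> k \in K -> i != k.
Proof. by rewrite split_memI => iK kK; apply: contraNneq iK => ->. Qed.

Definition split_switch (k1 i1 k2 i2 : T) : Prop :=
  [/\ k1 \in K, k2 \in K, i1 \in I & i2 \in I] /\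
  [/\ e k1 i1, e k2 i2, ~~ e k1 i2 & ~~ e k2 i1].

Lemma split_switchC k1 i1 k2 i2 :
  split_switch k1 i1 k2 i2 -> split_switch k2 i2 k1 i1.
Proof. by case=> [[? ? ? ?] [? ? ? ?]]. Qed.

Lemma split_switch_two_switch k1 i1 k2 i2 :
  split_switch k1 i1 k2 i2 -> two_switch e k1 i1 i2 k2.
Proof.
case=> [[k1K k2K i1I i2I] [e11 e22 n12 n21]].
have neqKI k i : k \in K -> i \in I -> (k == i) = false.
  by move=> kK iI; rewrite eq_sym (negbTE (split_neqIK iI kK)).
have k12 : (k1 == k2) = false by apply/eqP=> k12; move: n21; rewrite -k12 e11.
have i12 : (i1 == i2) = false by apply/eqP=> i12; move: n12; rewrite -i12 e11.
rewrite /two_switch /= !inE e11 (e_sym i2) e22 n12 (e_sym i1) n21.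
by rewrite k12 i12 (eq_sym i1) (eq_sym i2) !neqKI.
Qed.

Lemma split_switch_of_two_switch a b c d : two_switch e a b c d ->
  split_switch a b d c \/ split_switch b a c d.
Proof.
case/and5P=> uniq_abcd eab ecd nac nbd.
move: uniq_abcd; rewrite /= !inE !negb_or.
case/and4P=> /and3P [_ ac _] /andP [_ bd] _ _.
have [aK | aI] := boolP (a \in K); [left | right; rewrite -split_memI in aI].
- have cI : c \in I.
    by rewrite split_memI; apply: contraNN nac => /(split_adjK aK); apply.
  have dK : d \in K by apply: split_adjI cI ecd.
  have bI : b \in I by rewrite split_memI; apply: contraNN nbd => /split_adjK; apply.
  by split; split; rewrite // e_sym.
- have bK : b \in K by apply: split_adjI aI eab.
  have dI : d \in I.
    by rewrite split_memI; apply: contraNN nbd => /(split_adjK bK); apply.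
  have cK : c \in K by apply: (split_adjI dI); rewrite e_sym.
  by split; split; rewrite // e_sym.
Qed.

Lemma split_switch_of_A4 v w : A4 e v w -> exists k1 i1 k2 i2,
  [/\ split_switch k1 i1 k2 i2, v \in [:: k1; i1; k2; i2]
    & w \in [:: k1; i1; k2; i2]].
Proof.
case/two_switch_of_A4=> [a [b [c [d [sw v_in w_in]]]]].
have [ssw | ssw] := split_switch_of_two_switch sw.
- have /perm_mem eq_mem : perm_eq [:: a; b; c; d] [:: a; b; d; c].
    by rewrite !perm_cons (perm_catC [:: c]).
  by exists a, b, d, c; rewrite -!eq_mem.
- have /perm_mem eq_mem : perm_eq [:: a; b; c; d] [:: b; a; c; d].
    by rewrite (perm_catCA [:: a] [:: b]).
  by exists b, a, c, d; rewrite -!eq_mem.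
Qed.

Lemma split_switch_memK k1 i1 k2 i2 t : split_switch k1 i1 k2 i2 ->
  t \in [:: k1; i1; k2; i2] -> t \in K -> t = k1 \/ t = k2.
Proof.
case=> [[_ _ i1I i2I] _]; rewrite !split_memI in i1I i2I.
by rewrite !inE => /or4P [] /eqP -> tK; [left | move: i1I | right | move: i2I];
  rewrite ?tK.
Qed.

Lemma split_switch_memI k1 i1 k2 i2 t : split_switch k1 i1 k2 i2 ->
  t \in [:: k1; i1; k2; i2] -> t \in I -> t = i1 \/ t = i2.
Proof.
case=> [[k1K k2K _ _] _].
by rewrite !inE => /or4P [] /eqP -> tI; [move: tI | left | move: tI | right];
  rewrite ?split_memI ?k1K ?k2K.
Qed.

Lemma split_switch_of_A4_KK v w : A4 e v w -> v \in K -> w \in K ->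
  exists i j, split_switch v i w j.
Proof.
move=> vw; have := A4_neq vw.
case/split_switch_of_A4: vw => [k1 [i1 [k2 [i2 [sw v_in w_in]]]]] nvw vK wK.
case: (split_switch_memK sw v_in vK) (split_switch_memK sw w_in wK) nvw
  => -> [] ->; rewrite ?eqxx // => _.
- by exists i1, i2.
- by exists i2, i1; apply: split_switchC.
Qed.

Lemma split_switch_of_A4_IK v w : A4 e v w -> v \in I -> w \in K ->
  (exists k i, split_switch w v k i) \/ (exists k i, split_switch k v w i).
Proof.
case/split_switch_of_A4=> [k1 [i1 [k2 [i2 [sw v_in w_in]]]]] vI wK.
have swC := split_switchC sw.
case: (split_switch_memI sw v_in vI) (split_switch_memK sw w_in wK) => -> [] ->.
- by left; exists k2, i2.
- by right; exists k1, i2.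
- by right; exists k2, i1.
- by left; exists k1, i1.
Qed.

Lemma split_switch_A4 k1 i1 k2 i2 : split_switch k1 i1 k2 i2 ->
  [/\ A4 e i1 k1, A4 e i1 k2 & A4 e i1 i2].
Proof.
move=> sw; have tw := split_switch_two_switch sw.
have [[k1K k2K i1I i2I] [e11 _ n12 _]] := sw.
have i12 : i1 != i2 by apply: contraNneq n12 => <-.
by split; apply: (A4_two_switch tw); rewrite ?inE ?eqxx ?orbT //; apply: split_neqIK.
Qed.

Lemma short_A4_path_via_I_partner x i z j u w y :
  split_switch x i z j -> split_switch x u w y -> short_A4_path_via_I e I u z.
Proof.
move=> sxz sxu.
have [[xK zK iI jI] [exi ezj nxj nzi]] := sxz.
have [[_ wK uI yI] [exu ewy nxy nwu]] := sxu.
have [ezu | nzu] := boolP (e z u); last first.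
  have sxuz : split_switch x u z j by split; split.
  by have [_ uz _] := split_switch_A4 sxuz; apply: short_A4_path_via_I_edge.
have [ezy | nzy] := boolP (e z y); last first.
  have szu : split_switch z u w y by split; split.
  by have [uz _ _] := split_switch_A4 szu; apply: short_A4_path_via_I_edge.
have szy : split_switch z y x i by split; split.
have [_ _ uy] := split_switch_A4 sxu.
have [_ _ yi] := split_switch_A4 szy.
have [_ iz _] := split_switch_A4 sxz.
apply: (short_A4_path_via_I_path3 uI yI iI _ _ uy yi iz).
- by rewrite split_memI negbK.
- by apply: contraNneq nzi => <-.
Qed.

Lemma short_A4_path_via_I_opposite x i z j u w y :
  split_switch x i z j -> split_switch w u x y -> short_A4_path_via_I e I u z.
Proof.
move=> sxz swu.
have [[xK zK iI jI] [exi ezj nxj nzi]] := sxz.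
have [[wK _ uI yI] [ewu exy nwy nxu]] := swu.
have [ezu | nzu] := boolP (e z u).
  have szu : split_switch z u x i by split; split.
  by have [uz _ _] := split_switch_A4 szu; apply: short_A4_path_via_I_edge.
have [ewj | nwj] := boolP (e w j); last first.
  have swz : split_switch w u z j by split; split.
  by have [_ uz _] := split_switch_A4 swz; apply: short_A4_path_via_I_edge.
have sxj : split_switch x y w j by split; split.
have [_ _ uy] := split_switch_A4 swu.
have [_ _ yj] := split_switch_A4 sxj.
have [jz _ _] := split_switch_A4 (split_switchC sxz).
apply: (short_A4_path_via_I_path3 uI yI jI _ _ uy yj jz).
- by rewrite split_memI negbK.
- by apply: contraNneq nzu => ->.
Qed.

End SplitGraph.

Theorem lemma2p3 (T : finType) (e : rel T) (K I : {set T}) (u z x : T) :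
  simple_graph e -> split_bipartition e K I ->
  u \in I -> z \in K -> x \in K ->
  uniq [:: u; x; z] -> A4 e u x -> A4 e x z ->
  exists p : seq T,
    [/\ path (A4 e) u p, last u p = z, uniq (u :: p),
        all (fun v => (v == z) || (v \in I)) (u :: p)
      & size (u :: p) <= 4].
Proof.
move=> [e_sym _] split uI zK xK _ ux xz.
have [i [j sxz]] := split_switch_of_A4_KK e_sym split xz xK zK.
have [[w [y sxu]] | [w [y swu]]] := split_switch_of_A4_IK e_sym split ux uI xK.
- exact: short_A4_path_via_I_partner sxz sxu.
- exact: short_A4_path_via_I_opposite sxz swu.
Qed.
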